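(* Let $F$ be a non-archimedean local field of any characteristic. Then every element of $K=Sp_4(\mathcal{O})$ is a product $k_1k_2k_3\cdots k_{60}$ with $k_{2m-1}\in K_1$ and $k_{2m}\in K_2$ for $1\leq m\leq 30$; that is, $K=(K_1K_2)^{30}$.
   Context: $\mathcal{O}$ is the ring of integers of $F$. $Sp_4$ is defined by $\{g:{}^tgJg=J\}$ with $J$ the $4\times4$ matrix having $J_{14}=J_{23}=1$, $J_{32}=J_{41}=-1$, other entries $0$. With $Q=\begin{pmatrix}0&1\\1&0\end{pmatrix}$, $K_1=\Big\{\begin{pmatrix}A&0\\0&Q\,{}^tA^{-1}Q\end{pmatrix}:A\in GL_2(\mathcal{O})\Big\}$ and $K_2=\Big\{\begin{pmatrix}1&0&0\\0&B&0\\0&0&1\end{pmatrix}:B\in SL_2(\mathcal{O})\Big\}$ (block sizes $1,2,1$), both subgroups of $K$. *)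

From HB Require Import structures.
From mathcomp Require Import all_boot all_order all_algebra.
Set Implicit Arguments. Unset Strict Implicit. Unset Printing Implicit Defensive.
Import Order.TTheory GRing.Theory Num.Theory.
Local Open Scope ring_scope.

Section LocalField.
Variable F : fieldType.
(* v is a normalized discrete valuation; only its values on nonzero
   elements matter (v 0 is irrelevant). *)
Variable v : F -> int.

Definition inO (x : F) : bool := (x == 0) || (0 <= v x).

(* x and y are congruent modulo the n-th power of the maximal ideal *)
Definition vclose (n : int) (x y : F) : Prop := x = y \/ n <= v (x - y).

Definition nonarch_local_field : Prop :=
  [/\ (forall x y, x != 0 -> y != 0 -> v (x * y) = v x + v y),
      (forall x y, x != 0 -> y != 0 -> x + y != 0 ->
          Num.min (v x) (v y) <= v (x + y)),
      (forall n : int, exists x, x != 0 /\ v x = n),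
      (* finite residue field: finitely many representatives of O/m *)
      (exists s : seq F, all inO s /\
          forall x, inO x -> exists2 r, r \in s & vclose 1 x r) &
      (forall u : nat -> F,
          (forall n : int, exists N, forall p q, (N <= p)%N -> (N <= q)%N ->
              vclose n (u p) (u q)) ->
          exists l, forall n : int, exists N, forall p, (N <= p)%N ->
              vclose n (u p) l)].

Definition intmx m n (A : 'M[F]_(m, n)) : Prop := forall i j, inO (A i j).

Definition Jmx : 'M[F]_4 :=
  \matrix_(i < 4, j < 4)
    if ((i == 0 :> nat) && (j == 3 :> nat)) || ((i == 1 :> nat) && (j == 2 :> nat))
    then 1
    else if ((i == 2 :> nat) && (j == 1 :> nat)) || ((i == 3 :> nat) && (j == 0 :> nat))
    then -1 else 0.

Definition Qmx : 'M[F]_2 :=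
  \matrix_(i < 2, j < 2) if i != j then 1 else 0.

Definition inSp4O (g : 'M[F]_4) : Prop :=
  intmx g /\ g^T *m Jmx *m g = Jmx.

Definition inGL2O (A : 'M[F]_2) : Prop :=
  A \in unitmx /\ intmx A /\ intmx (invmx A).
Definition inSL2O (B : 'M[F]_2) : Prop :=
  intmx B /\ \det B = 1.

Definition inK1 (g : 'M[F]_4) : Prop :=
  exists A : 'M[F]_2, inGL2O A /\
    g = block_mx A 0 0 (Qmx *m (invmx A)^T *m Qmx).

Definition inK2 (g : 'M[F]_4) : Prop :=
  exists B : 'M[F]_2, inSL2O B /\
    g = block_mx (block_mx (1 : 'M[F]_1) 0 0 B : 'M[F]_(1 + 2)) 0 0 (1 : 'M[F]_1).

End LocalField.

From HB Require Import structures.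
From mathcomp Require Import all_boot all_order all_algebra.
From mathcomp Require Import ring zify.
Import Order.TTheory GRing.Theory Num.Theory.
Set Implicit Arguments. Unset Strict Implicit. Unset Printing Implicit Defensive.
Local Open Scope ring_scope.

(* Let x be the first column of g in Sp4(O).  The (0, 3) entry of g^T J g = J reads
   x0 g33 + x1 g23 - x2 g13 - x3 g03 = 1, so some entry of x is a unit of O.  Left
   multiplication by at most nine elements of K1 u K2 (the swap P, unipotents in GL2(O)
   and SL2(O)) moves x to e1, and one more element of K2 makes the middle 2x2 block the
   identity.  What remains is a Heisenberg element H(a, b, c), which is a product of
   eleven elements of K1 u K2: the long root element X(t) is P diag(1, [[1, t], [0, 1]], 1) P,
   and the short root element Y(b) comes from a commutator.  Each of these 21 factors is a
   pair k1 k2 with one trivial entry, and 21 <= 30. *)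


Section NatIndexedMatrices.
Variable F : fieldType.

(* Matrices are handled through nat-indexed entry functions, so that entrywise identities
   become ring identities after case analysis on the indices.  [ent g i j] is the 0-based
   (i, j) entry; out-of-range indices are clamped by [inord] to a junk entry. *)
Definition nmx n (f : nat -> nat -> F) : 'M[F]_n := \matrix_(i < n, j < n) f i j.
Definition ent n (g : 'M[F]_n.+1) (i j : nat) := g (inord i) (inord j).

Lemma nmx_eq n f h : (forall i j, (i < n)%N -> (j < n)%N -> f i j = h i j) ->
  nmx n f = nmx n h.
Proof. by move=> fh; apply/matrixP => i j; rewrite !mxE; exact: fh. Qed.

Lemma ent_nmx n f i j : (i < n.+1)%N -> (j < n.+1)%N -> ent (nmx n.+1 f) i j = f i j.
Proof. by move=> ? ?; rewrite /ent mxE !inordK. Qed.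

Lemma nmx_ent n (g : 'M[F]_n.+1) : g = nmx n.+1 (ent g).
Proof. by apply/matrixP => i j; rewrite !mxE /ent !inord_val. Qed.

Lemma mul_nmx4 f h : nmx 4 f * nmx 4 h =
  nmx 4 (fun i j => f i 0%N * h 0%N j + f i 1%N * h 1%N j
                  + f i 2%N * h 2%N j + f i 3%N * h 3%N j).
Proof. by apply/matrixP => i j; rewrite !mxE !big_ord_recl big_ord0 !mxE /= addr0 !addrA. Qed.

Lemma mul_nmx2 f h : nmx 2 f *m nmx 2 h =
  nmx 2 (fun i j => f i 0%N * h 0%N j + f i 1%N * h 1%N j).
Proof. by apply/matrixP => i j; rewrite !mxE !big_ord_recl big_ord0 !mxE /= addr0. Qed.

Lemma ent_mul4 f g i j : (i < 4)%N -> (j < 4)%N -> ent (nmx 4 f * g) i j =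
  f i 0%N * ent g 0 j + f i 1%N * ent g 1 j + f i 2%N * ent g 2 j + f i 3%N * ent g 3 j.
Proof. by move=> ? ?; rewrite {1}(nmx_ent g) mul_nmx4 ent_nmx. Qed.

Lemma det_nmx2 f : \det (nmx 2 f) = f 0%N 0%N * f 1%N 1%N - f 0%N 1%N * f 1%N 0%N.
Proof.
rewrite (expand_det_row _ ord0) !big_ord_recl big_ord0 /cofactor !det_mx11 !mxE /=.
by rewrite expr0 expr1 mul1r addr0 mulN1r mulrN.
Qed.

Lemma scalar_nmx n : (1%:M : 'M[F]_n) = nmx n (fun i j => (i == j)%:R).
Proof. by apply/matrixP => i j; rewrite !mxE. Qed.

Lemma trmx_nmx n f : (nmx n f)^T = nmx n (fun i j => f j i).
Proof. by apply/matrixP => i j; rewrite !mxE. Qed.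

Lemma block_diag22_nmx (A D : 'M[F]_2) : block_mx A 0 0 D = nmx (2 + 2) (fun i j =>
  if (i < 2)%N && (j < 2)%N then ent A i j
  else if (2 <= i)%N && (2 <= j)%N then ent D (i - 2) (j - 2) else 0).
Proof.
apply/matrixP => i j; rewrite -[i](@splitK 2 2) -[j](@splitK 2 2).
case: (@split 2 2 i) => i'; case: (@split 2 2 j) => j'; cbn [unsplit].
all: rewrite ?block_mxEul ?block_mxEur ?block_mxEdl ?block_mxEdr !mxE /=.
all: case: i' => [[|[|i']] ?] //; case: j' => [[|[|j']] ?] //=.
all: by rewrite /ent; congr (_ _ _); apply/val_inj; rewrite /= inordK.
Qed.

Lemma block_diag121_nmx (B : 'M[F]_2) :
  block_mx (block_mx (1 : 'M[F]_1) 0 0 B : 'M_(1 + 2)) 0 0 (1 : 'M[F]_1) =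
  nmx (3 + 1) (fun i j =>
    if ((i == 0%N) && (j == 0%N)) || ((i == 3%N) && (j == 3%N)) then 1
    else if (0 < i < 3)%N && (0 < j < 3)%N then ent B (i - 1) (j - 1) else 0).
Proof.
apply/matrixP => i j; rewrite -[i](@splitK 3 1) -[j](@splitK 3 1).
case: (@split 3 1 i) => i'; case: (@split 3 1 j) => j'; cbn [unsplit].
all: rewrite ?block_mxEul ?block_mxEur ?block_mxEdl ?block_mxEdr.
all: try (rewrite -[i'](@splitK 1 2); case: (@split 1 2 i') => i2; cbn [unsplit]).
all: try (rewrite -[j'](@splitK 1 2); case: (@split 1 2 j') => j2; cbn [unsplit]).
all: rewrite ?block_mxEul ?block_mxEur ?block_mxEdl ?block_mxEdr !mxE /=.
all: try (case: i2 => [[|[|?]] ?] //=); try (case: j2 => [[|[|?]] ?] //=).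
all: try (case: i' => [[|?] ?] //=); try (case: j' => [[|?] ?] //=).
all: by rewrite /ent; congr (_ _ _); apply/val_inj; rewrite /= inordK.
Qed.

End NatIndexedMatrices.

Arguments ent {F n} g i j : simpl never.

Ltac nmx_cases :=
  let i := fresh "i" in let j := fresh "j" in
  let hi := fresh "hi" in let hj := fresh "hj" in
  apply: nmx_eq => i j hi hj;
  case: i hi => [|[|[|[|i]]]] // _; case: j hj => [|[|[|[|j]]]] // _.

Section Sp4O.
Variables (F : fieldType) (v : F -> int).

Hypothesis vM : forall x y, x != 0 -> y != 0 -> v (x * y) = v x + v y.
Hypothesis vD : forall x y, x != 0 -> y != 0 -> x + y != 0 ->
  Num.min (v x) (v y) <= v (x + y).

Definition unitO (x : F) := (x != 0) && (v x == 0).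
Definition inm (x : F) := (x == 0) || (0 < v x).

Lemma v1 : v 1 = 0.
Proof.
have o0 : (1 : F) != 0 by rewrite oner_eq0.
by have := vM o0 o0; rewrite mulr1 => ?; lia.
Qed.

Lemma vN1 : v (-1) = 0.
Proof.
have N1 : (-1 : F) != 0 by rewrite oppr_eq0 oner_neq0.
by have := vM N1 N1; rewrite mulrNN mulr1 v1 => ?; lia.
Qed.

Lemma inO0 : inO v 0. Proof. by rewrite /inO eqxx. Qed.
Lemma inO1 : inO v 1. Proof. by rewrite /inO v1 lexx orbT. Qed.
Lemma inON1 : inO v (-1). Proof. by rewrite /inO vN1 lexx orbT. Qed.

Lemma inOM x y : inO v x -> inO v y -> inO v (x * y).
Proof.
rewrite /inO; have [->|x0] := eqVneq x 0; first by rewrite mul0r eqxx.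
have [->|y0] := eqVneq y 0; first by rewrite mulr0 eqxx.
by rewrite /= (vM x0 y0) => ? ?; apply/orP; right; lia.
Qed.

Lemma inON x : inO v x -> inO v (- x).
Proof. by rewrite -mulN1r; apply: inOM inON1. Qed.

Lemma inOD x y : inO v x -> inO v y -> inO v (x + y).
Proof.
have [->|x0] := eqVneq x 0; first by rewrite add0r.
have [->|y0] := eqVneq y 0; first by rewrite addr0.
have [->|xy0] := eqVneq (x + y) 0; first by move=> *; exact: inO0.
rewrite /inO (negPf x0) (negPf y0) (negPf xy0) /= => vx vy.
by apply: le_trans (vD x0 y0 xy0); rewrite le_min vx vy.
Qed.

Lemma unitO1 : unitO 1. Proof. by rewrite /unitO oner_eq0 v1. Qed.
Lemma unitON1 : unitO (-1). Proof. by rewrite /unitO oppr_eq0 oner_eq0 vN1. Qed.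
Lemma unitO_neq0 x : unitO x -> x != 0. Proof. by case/andP. Qed.

Lemma unitO_invO x : unitO x -> inO v x^-1.
Proof.
case/andP=> x0 /eqP vx; have xi0 : x^-1 != 0 by rewrite invr_eq0.
by have := vM x0 xi0; rewrite mulfV // v1 vx /inO => ?; apply/orP; right; lia.
Qed.

Lemma inm_nonunitO x : inO v x -> ~~ unitO x -> inm x.
Proof. by rewrite /inO /inm /unitO; case: eqP => //= _ vx vx0; rewrite lt_def vx vx0. Qed.

Lemma inmD x y : inm x -> inm y -> inm (x + y).
Proof.
have [->|x0] := eqVneq x 0; first by rewrite add0r.
have [->|y0] := eqVneq y 0; first by rewrite addr0.
have [->|xy0] := eqVneq (x + y) 0; first by rewrite /inm eqxx.
rewrite /inm (negPf x0) (negPf y0) (negPf xy0) /= => vx vy.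
by apply: lt_le_trans (vD x0 y0 xy0); rewrite lt_min vx vy.
Qed.

Lemma inmM x y : inO v x -> inm y -> inm (x * y).
Proof.
rewrite /inO /inm; have [->|x0] := eqVneq x 0; first by rewrite mul0r eqxx.
have [->|y0] := eqVneq y 0; first by rewrite mulr0 eqxx.
by rewrite /= (vM x0 y0) => ? ?; apply/orP; right; lia.
Qed.

Lemma inmN x : inm x -> inm (- x).
Proof. by rewrite -mulN1r; apply: inmM inON1. Qed.

Lemma inm1F : inm 1 = false.
Proof. by rewrite /inm oner_eq0 v1 ltxx. Qed.

Definition Jent (i j : nat) : F :=
  if ((i == 0%N) && (j == 3%N)) || ((i == 1%N) && (j == 2%N)) then 1
  else if ((i == 2%N) && (j == 1%N)) || ((i == 3%N) && (j == 0%N)) then -1 else 0.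

Lemma Jmx_nmx : Jmx F = nmx 4 Jent.
Proof. by apply/matrixP => i j; rewrite !mxE. Qed.

Lemma Qmx_nmx : Qmx F = nmx 2 (fun i j => if i != j then 1 else 0).
Proof. by apply/matrixP => i j; rewrite !mxE. Qed.

Lemma symp_nmx f : (nmx 4 f)^T *m Jmx F *m nmx 4 f = nmx 4 (fun i j =>
  f 0%N i * f 3%N j + f 1%N i * f 2%N j - f 2%N i * f 1%N j - f 3%N i * f 0%N j).
Proof.
rewrite trmx_nmx Jmx_nmx !mulmxE !mul_nmx4; apply: nmx_eq => i j _ _.
by rewrite /Jent /=; ring.
Qed.

Lemma Sp4O_ent g i j : inSp4O v g -> (i < 4)%N -> (j < 4)%N ->
  ent g 0 i * ent g 3 j + ent g 1 i * ent g 2 j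
  - ent g 2 i * ent g 1 j - ent g 3 i * ent g 0 j = Jent i j.
Proof.
case=> _ gJg ? ?; have := congr1 (fun M => ent M i j) gJg.
by rewrite (nmx_ent g) symp_nmx Jmx_nmx !ent_nmx.
Qed.

Lemma Sp4O_entO g i j : inSp4O v g -> inO v (ent g i j).
Proof. by case=> gO _; apply: gO. Qed.

Lemma intmx_nmx n f : (forall i j, (i < n)%N -> (j < n)%N -> inO v (f i j)) ->
  intmx v (nmx n f).
Proof. by move=> fO i j; rewrite mxE; apply: fO. Qed.

Lemma intmx_mul n (A B : 'M[F]_n) : intmx v A -> intmx v B -> intmx v (A *m B).
Proof.
move=> AO BO i j; rewrite mxE.
by apply: (big_ind (inO v)) => [|x y|k _]; [exact: inO0 | exact: inOD | exact: inOM].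
Qed.

Lemma Sp4O_mul A B : inSp4O v A -> inSp4O v B -> inSp4O v (A * B).
Proof.
case=> AO AJA [BO BJB]; split; first exact: intmx_mul.
by rewrite -mulmxE trmx_mul !mulmxA -(mulmxA B^T) -(mulmxA B^T) AJA.
Qed.

(* diag(A, Q A^-T Q) for A = [[p, q], [r, s]] of determinant d. *)
Definition K1ent (p q r s : F) (i j : nat) : F :=
  let d := p * s - q * r in
  match i, j with
  | 0, 0 => p | 0, 1 => q | 1, 0 => r | 1, 1 => s
  | 2, 2 => (p / d)%R | 2, 3 => (- q / d)%R | 3, 2 => (- r / d)%R | 3, 3 => (s / d)%R
  | _, _ => 0%R end%N.
Definition K1mx p q r s := nmx 4 (K1ent p q r s).

Definition K2ent (p q r s : F) (i j : nat) : F :=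
  match i, j with
  | 0, 0 => 1%R | 1, 1 => p | 1, 2 => q | 2, 1 => r | 2, 2 => s | 3, 3 => 1%R
  | _, _ => 0%R end%N.
Definition K2mx p q r s := nmx 4 (K2ent p q r s).

Section Embeddings.
Variables p q r s : F.
Hypotheses (pO : inO v p) (qO : inO v q) (rO : inO v r) (sO : inO v s).
Let A := nmx 2 (fun i j => match i, j with 0, 0 => p | 0, 1 => q | 1, 0 => r | _, _ => s end%N).

Lemma K1mx_K1 : unitO (p * s - q * r) -> inK1 v (K1mx p q r s).
Proof.
move=> dU; have d0 := unitO_neq0 dU; have diO := unitO_invO dU.
pose Ai := nmx 2 (fun i j => let d := p * s - q * r in
  match i, j with
  | 0, 0 => (s / d)%R | 0, 1 => (- q / d)%R | 1, 0 => (- r / d)%R | _, _ => (p / d)%R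
  end%N).
have AAi : A *m Ai = 1%:M.
  by rewrite mul_nmx2 scalar_nmx; apply: nmx_eq => -[|[|i]] [|[|j]] //= _ _; field.
have [AU _] := mulmx1_unit AAi.
have invA : invmx A = Ai by rewrite -[invmx A]mulmx1 -AAi mulmxA mulVmx // mul1mx.
exists A; split; last first.
  rewrite block_diag22_nmx invA Qmx_nmx trmx_nmx !mul_nmx2 /K1mx.
  by nmx_cases; rewrite /= ?ent_nmx //=; field.
split=> //; split; first by apply: intmx_nmx => -[|[|i]] [|[|j]].
rewrite invA; apply: intmx_nmx => -[|[|i]] [|[|j]] //= _ _.
all: by apply: inOM => //; exact: inON.
Qed.

Lemma K1mx_Sp4O : unitO (p * s - q * r) -> inSp4O v (K1mx p q r s).
Proof.
move=> dU; have d0 := unitO_neq0 dU; have diO := unitO_invO dU.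
split; last by rewrite /K1mx symp_nmx Jmx_nmx; nmx_cases; rewrite /Jent /=; field.
apply: intmx_nmx => -[|[|[|[|i]]]] [|[|[|[|j]]]] //= _ _; rewrite ?inO0 //.
all: by apply: inOM => //; exact: inON.
Qed.

Hypothesis det1 : p * s - q * r = 1.

Lemma K2mx_K2 : inK2 v (K2mx p q r s).
Proof.
exists A; split.
  by split; [apply: intmx_nmx => -[|[|i]] [|[|j]] | rewrite det_nmx2].
by rewrite block_diag121_nmx /K2mx; nmx_cases; rewrite /= ?ent_nmx.
Qed.

Lemma K2mx_Sp4O : inSp4O v (K2mx p q r s).
Proof.
split.
  by apply: intmx_nmx => -[|[|[|[|i]]]] [|[|[|[|j]]]] //= _ _; rewrite ?inO0 ?inO1.
have det1N : - (p * s - q * r) = -1 by rewrite det1.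
rewrite /K2mx symp_nmx Jmx_nmx; nmx_cases; rewrite /Jent /=.
all: first [ring | rewrite -det1; ring | rewrite -det1N; ring].
Qed.

End Embeddings.

Ltac solve_inO := repeat match goal with
  | |- is_true (inO _ 0) => exact: inO0
  | |- is_true (inO _ 1) => exact: inO1
  | |- is_true (inO _ (- _)) => apply: inON
  | |- is_true (inO _ (_ + _)) => apply: inOD
  | |- is_true (inO _ (_ * _)) => apply: inOM
  | |- is_true (inO _ (ent _ _ _)) => apply: Sp4O_entO; eassumption
  | |- _ => assumption
  end.

Lemma eq_of_subr_eq (x y a b : F) : a = b -> x - y = a - b -> x = y.
Proof. by move=> -> /eqP; rewrite subrr subr_eq0 => /eqP. Qed.

Ltac lin H := first [apply: (eq_of_subr_eq H); ring | apply: (eq_of_subr_eq (esym H)); ring].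

Ltac nmx_solve :=
  rewrite /= ?mul0r ?mulr0 ?mulr1 ?mul1r ?subr0 ?sub0r ?divr1 ?invr1 ?invrN1 //=; ring.

Lemma one_nmx4 : (1 : 'M[F]_4) = nmx 4 (fun i j => (i == j)%:R).
Proof. exact: scalar_nmx. Qed.

Lemma K2mx_inv p q r s : p * s - q * r = 1 -> K2mx s (- q) (- r) p * K2mx p q r s = 1.
Proof.
move=> det1; rewrite /K2mx mul_nmx4 one_nmx4; nmx_cases; rewrite /=; try ring.
all: by rewrite -det1; ring.
Qed.

Definition Lmx (c : F) : 'M[F]_4 := nmx 4 (fun i j =>
  match i, j with 1, 0 => c | 3, 2 => (- c)%R | _, _ => if i == j then 1%R else 0%R end%N).
Definition Umx (c : F) : 'M[F]_4 := nmx 4 (fun i j =>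
  match i, j with 0, 1 => c | 2, 3 => (- c)%R | _, _ => if i == j then 1%R else 0%R end%N).
Definition Pmx : 'M[F]_4 := nmx 4 (fun i j =>
  match i, j with 0, 1 | 1, 0 | 2, 3 | 3, 2 => 1%R | _, _ => 0%R end%N).

Lemma Lmx_K1mx c : Lmx c = K1mx 1 0 c 1.
Proof. by rewrite /Lmx /K1mx; nmx_cases; nmx_solve. Qed.
Lemma Umx_K1mx c : Umx c = K1mx 1 c 0 1.
Proof. by rewrite /Umx /K1mx; nmx_cases; nmx_solve. Qed.
Lemma Pmx_K1mx : Pmx = K1mx 0 1 1 0.
Proof. by rewrite /Pmx /K1mx; nmx_cases; nmx_solve. Qed.

Lemma Lmx_K1 c : inO v c -> inK1 v (Lmx c).
Proof.
by move=> cO; rewrite Lmx_K1mx; apply: K1mx_K1; solve_inO; rewrite mulr1 mul0r subr0 unitO1.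
Qed.
Lemma Umx_K1 c : inO v c -> inK1 v (Umx c).
Proof.
by move=> cO; rewrite Umx_K1mx; apply: K1mx_K1; solve_inO; rewrite mulr1 mulr0 subr0 unitO1.
Qed.
Lemma Pmx_K1 : inK1 v Pmx.
Proof. by rewrite Pmx_K1mx; apply: K1mx_K1; solve_inO; rewrite mulr1 mul0r sub0r unitON1. Qed.

Lemma Lmx_Sp4O c : inO v c -> inSp4O v (Lmx c).
Proof.
by move=> cO; rewrite Lmx_K1mx; apply: K1mx_Sp4O; solve_inO; rewrite mulr1 mul0r subr0 unitO1.
Qed.
Lemma Umx_Sp4O c : inO v c -> inSp4O v (Umx c).
Proof.
by move=> cO; rewrite Umx_K1mx; apply: K1mx_Sp4O; solve_inO; rewrite mulr1 mulr0 subr0 unitO1.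
Qed.
Lemma Pmx_Sp4O : inSp4O v Pmx.
Proof. by rewrite Pmx_K1mx; apply: K1mx_Sp4O; solve_inO; rewrite mulr1 mul0r sub0r unitON1. Qed.

Lemma Lmx_inv c : Lmx (- c) * Lmx c = 1.
Proof. by rewrite /Lmx mul_nmx4 one_nmx4; nmx_cases; nmx_solve. Qed.
Lemma Umx_inv c : Umx (- c) * Umx c = 1.
Proof. by rewrite /Umx mul_nmx4 one_nmx4; nmx_cases; nmx_solve. Qed.
Lemma Pmx_inv : Pmx * Pmx = 1.
Proof. by rewrite /Pmx mul_nmx4 one_nmx4; nmx_cases; nmx_solve. Qed.

Lemma K1_1 : inK1 v 1.
Proof.
have -> : (1 : 'M[F]_4) = Lmx 0 by rewrite /Lmx one_nmx4; nmx_cases; nmx_solve.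
exact: Lmx_K1 inO0.
Qed.

Lemma K2_1 : inK2 v 1.
Proof.
have -> : (1 : 'M[F]_4) = K2mx 1 0 0 1 by rewrite /K2mx one_nmx4; nmx_cases; nmx_solve.
by apply: K2mx_K2; solve_inO; rewrite mulr1 mulr0 subr0.
Qed.

Inductive K1K2pow : nat -> 'M[F]_4 -> Prop :=
| K1K2pow0 : K1K2pow 0 1
| K1K2powS n a b g : inK1 v a -> inK2 v b -> K1K2pow n g -> K1K2pow n.+1 (a * b * g).

Lemma K1K2pow_mul m n a b : K1K2pow m a -> K1K2pow n b -> K1K2pow (m + n) (a * b).
Proof.
move=> Ka; elim: Ka b => [|m' a1 b1 g Ka1 Kb1 _ IH] b Kb; first by rewrite mul1r add0n.
by rewrite -mulrA addSn; apply: K1K2powS => //; exact: IH.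
Qed.

Lemma K1K2pow_K1 a : inK1 v a -> K1K2pow 1 a.
Proof. by move=> Ka; have := K1K2powS Ka K2_1 K1K2pow0; rewrite !mulr1. Qed.

Lemma K1K2pow_K2 b : inK2 v b -> K1K2pow 1 b.
Proof. by move=> Kb; have := K1K2powS K1_1 Kb K1K2pow0; rewrite mul1r mulr1. Qed.

Lemma K1K2pow1 n : K1K2pow n 1.
Proof.
elim: n => [|n IH]; first exact: K1K2pow0.
by have := K1K2powS K1_1 K2_1 IH; rewrite !mulr1.
Qed.

Lemma K1K2pow_le m n g : (m <= n)%N -> K1K2pow m g -> K1K2pow n g.
Proof.
by move=> mn Kg; rewrite -(subnKC mn) -[g]mulr1; apply: K1K2pow_mul Kg (K1K2pow1 _).
Qed.

Lemma K1K2pow_step n k k' g : inK1 v k \/ inK2 v k -> inSp4O v k' -> k * k' = 1 ->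
  inSp4O v g -> (inSp4O v (k' * g) -> K1K2pow n (k' * g)) -> K1K2pow n.+1 g.
Proof.
move=> Kk k'Sp kk' gSp IH; have -> : g = k * (k' * g) by rewrite mulrA kk' mul1r.
have Kk1 : K1K2pow 1 k by case: Kk => [/K1K2pow_K1|/K1K2pow_K2].
exact: K1K2pow_mul Kk1 (IH (Sp4O_mul k'Sp gSp)).
Qed.

Lemma K1K2pow_stepL n c g : inO v c -> inSp4O v g ->
  (inSp4O v (Lmx c * g) -> K1K2pow n (Lmx c * g)) -> K1K2pow n.+1 g.
Proof.
by move=> cO; apply: K1K2pow_step (or_introl (Lmx_K1 (inON cO))) (Lmx_Sp4O cO) (Lmx_inv c).
Qed.

Lemma K1K2pow_stepU n c g : inO v c -> inSp4O v g ->
  (inSp4O v (Umx c * g) -> K1K2pow n (Umx c * g)) -> K1K2pow n.+1 g.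
Proof.
by move=> cO; apply: K1K2pow_step (or_introl (Umx_K1 (inON cO))) (Umx_Sp4O cO) (Umx_inv c).
Qed.

Lemma K1K2pow_stepP n g : inSp4O v g ->
  (inSp4O v (Pmx * g) -> K1K2pow n (Pmx * g)) -> K1K2pow n.+1 g.
Proof. exact: K1K2pow_step (or_introl Pmx_K1) Pmx_Sp4O Pmx_inv. Qed.

Lemma K1K2pow_stepK2 n p q r s g :
  inO v p -> inO v q -> inO v r -> inO v s -> p * s - q * r = 1 -> inSp4O v g ->
  (inSp4O v (K2mx p q r s * g) -> K1K2pow n (K2mx p q r s * g)) -> K1K2pow n.+1 g.
Proof.
move=> pO qO rO sO det1; have det1' : s * p - - q * - r = 1 by rewrite -det1; ring.
have Kinv := K2mx_K2 sO (inON qO) (inON rO) pO det1'.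
exact: K1K2pow_step (or_intror Kinv) (K2mx_Sp4O pO qO rO sO det1) (K2mx_inv det1).
Qed.

Definition Xmx (t : F) : 'M[F]_4 := nmx 4 (fun i j =>
  match i, j with 0, 3 => t | _, _ => if i == j then 1%R else 0%R end%N).
Definition Ymx (b : F) : 'M[F]_4 := nmx 4 (fun i j =>
  match i, j with 0, 2 | 1, 3 => b | _, _ => if i == j then 1%R else 0%R end%N).
Definition Hmx (a b c : F) : 'M[F]_4 := nmx 4 (fun i j =>
  match i, j with
  | 0, 1 => a | 0, 2 | 1, 3 => b | 0, 3 => c | 2, 3 => (- a)%R
  | _, _ => if i == j then 1%R else 0%R
  end%N).

Lemma K2mx_up_K2 t : inO v t -> inK2 v (K2mx 1 t 0 1).
Proof. by move=> tO; apply: K2mx_K2; solve_inO; rewrite mulr1 mulr0 subr0. Qed.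

Lemma Xmx_K1K2pow t : inO v t -> K1K2pow 3 (Xmx t).
Proof.
move=> tO; have -> : Xmx t = Pmx * (K2mx 1 t 0 1 * Pmx).
  by rewrite /Xmx /Pmx /K2mx !mul_nmx4; nmx_cases; nmx_solve.
exact: K1K2pow_mul (K1K2pow_K1 Pmx_K1)
  (K1K2pow_mul (K1K2pow_K2 (K2mx_up_K2 tO)) (K1K2pow_K1 Pmx_K1)).
Qed.

Lemma Ymx_K1K2pow b : inO v b -> K1K2pow 7 (Ymx b).
Proof.
move=> bO; have NbO := inON bO.
(* The commutator of [Umx 1] and [K2mx 1 b 0 1] is [Ymx b * Xmx b]. *)
have -> : Ymx b = Umx 1 * (K2mx 1 b 0 1 * (Umx (-1) * (K2mx 1 (- b) 0 1 * Xmx (- b)))).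
  by rewrite /Ymx /Umx /K2mx /Xmx !mul_nmx4; nmx_cases; nmx_solve.
apply: K1K2pow_mul (K1K2pow_K1 (Umx_K1 inO1)) _.
apply: K1K2pow_mul (K1K2pow_K2 (K2mx_up_K2 bO)) _.
apply: K1K2pow_mul (K1K2pow_K1 (Umx_K1 inON1)) _.
exact: K1K2pow_mul (K1K2pow_K2 (K2mx_up_K2 NbO)) (Xmx_K1K2pow NbO).
Qed.

Lemma Hmx_K1K2pow a b c : inO v a -> inO v b -> inO v c -> K1K2pow 11 (Hmx a b c).
Proof.
move=> aO bO cO; have -> : Hmx a b c = Xmx (c + a * b) * (Ymx b * Umx a).
  by rewrite /Hmx /Xmx /Ymx /Umx !mul_nmx4; nmx_cases; nmx_solve.
have abcO : inO v (c + a * b) by solve_inO.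
exact: K1K2pow_mul (Xmx_K1K2pow abcO)
  (K1K2pow_mul (Ymx_K1K2pow bO) (K1K2pow_K1 (Umx_K1 aO))).
Qed.

Lemma Sp4O_col_e1_Hmx g : inSp4O v g ->
  ent g 0 0 = 1 -> ent g 1 0 = 0 -> ent g 2 0 = 0 -> ent g 3 0 = 0 ->
  ent g 1 1 = 1 -> ent g 1 2 = 0 -> ent g 2 1 = 0 -> ent g 2 2 = 1 ->
  g = Hmx (ent g 0 1) (ent g 0 2) (ent g 0 3).
Proof.
move=> gSp h00 h10 h20 h30 h11 h12 h21 h22.
have h31 : ent g 3 1 = 0.
  have := Sp4O_ent (i := 0) (j := 1) gSp isT isT.
  by rewrite h00 h10 h20 h30 h11 /Jent /= => H; lin H.
have h32 : ent g 3 2 = 0.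
  have := Sp4O_ent (i := 0) (j := 2) gSp isT isT.
  by rewrite h00 h10 h20 h30 h22 /Jent /= => H; lin H.
have h33 : ent g 3 3 = 1.
  have := Sp4O_ent (i := 0) (j := 3) gSp isT isT.
  by rewrite h00 h10 h20 h30 /Jent /= => H; lin H.
have h23 : ent g 2 3 = - ent g 0 1.
  have := Sp4O_ent (i := 1) (j := 3) gSp isT isT.
  by rewrite h11 h21 h31 h33 /Jent /= => H; lin H.
have h13 : ent g 1 3 = ent g 0 2.
  have := Sp4O_ent (i := 2) (j := 3) gSp isT isT.
  by rewrite h12 h22 h32 h33 /Jent /= => H; lin H.
rewrite {1}(nmx_ent g) /Hmx; nmx_cases.
all: by rewrite /= ?h00 ?h10 ?h20 ?h30 ?h11 ?h12 ?h21 ?h22 ?h31 ?h32 ?h33 ?h23 ?h13.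
Qed.

Lemma col_e1_K1K2pow g : inSp4O v g ->
  ent g 0 0 = 1 -> ent g 1 0 = 0 -> ent g 2 0 = 0 -> ent g 3 0 = 0 -> K1K2pow 12 g.
Proof.
move=> gSp h00 h10 h20 h30.
have h31 : ent g 3 1 = 0.
  have := Sp4O_ent (i := 0) (j := 1) gSp isT isT.
  by rewrite h00 h10 h20 h30 /Jent /= => H; lin H.
have h32 : ent g 3 2 = 0.
  have := Sp4O_ent (i := 0) (j := 2) gSp isT isT.
  by rewrite h00 h10 h20 h30 /Jent /= => H; lin H.
have det1 : ent g 1 1 * ent g 2 2 - ent g 1 2 * ent g 2 1 = 1.
  have := Sp4O_ent (i := 1) (j := 2) gSp isT isT.
  by rewrite h31 h32 /Jent /= => H; lin H.
apply: (K1K2pow_stepK2 (p := ent g 2 2) (q := - ent g 1 2) (r := - ent g 2 1) (s := ent g 1 1)).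
all: try solve [solve_inO | rewrite -det1; ring].
move=> g'Sp; rewrite (Sp4O_col_e1_Hmx g'Sp); first by apply: Hmx_K1K2pow; apply: Sp4O_entO g'Sp.
all: by rewrite /K2mx ent_mul4 //= ?h00 ?h10 ?h20 ?h30; first [ring | lin det1].
Qed.

Lemma ent10_1_K1K2pow g : inSp4O v g -> ent g 1 0 = 1 -> K1K2pow 17 g.
Proof.
have col_e2 h : inSp4O v h ->
    ent h 0 0 = 0 -> ent h 1 0 = 1 -> ent h 2 0 = 0 -> ent h 3 0 = 0 -> K1K2pow 13 h.
  move=> hSp h0 h1 h2 h3; apply: (K1K2pow_stepP hSp) => h'Sp.
  by apply: col_e1_K1K2pow => //; rewrite /Pmx ent_mul4 //= h0 h1 h2 h3; ring.
have col_e2e3 h : inSp4O v h ->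
    ent h 0 0 = 0 -> ent h 1 0 = 1 -> ent h 2 0 = 1 -> ent h 3 0 = 0 -> K1K2pow 14 h.
  move=> hSp h0 h1 h2 h3.
  apply: (K1K2pow_stepK2 (p := 1) (q := 0) (r := -1) (s := 1) _ _ _ _ _ hSp).
  all: try solve [solve_inO | ring].
  by move=> h'Sp; apply: col_e2 => //; rewrite /K2mx ent_mul4 //= h0 h1 h2 h3; ring.
have col_011 h : inSp4O v h ->
    ent h 0 0 = 0 -> ent h 1 0 = 1 -> ent h 2 0 = 1 -> K1K2pow 15 h.
  move=> hSp h0 h1 h2; apply: (K1K2pow_stepL (c := ent h 3 0)) => // [|h'Sp].
    exact: Sp4O_entO hSp.
  by apply: col_e2e3 => //; rewrite /Lmx ent_mul4 //= h0 h1 h2; ring.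
have col_01 h : inSp4O v h -> ent h 0 0 = 0 -> ent h 1 0 = 1 -> K1K2pow 16 h.
  move=> hSp h0 h1.
  apply: (K1K2pow_stepK2 (p := 1) (q := 0) (r := 1 - ent h 2 0) (s := 1) _ _ _ _ _ hSp).
  all: try solve [solve_inO | ring].
  by move=> h'Sp; apply: col_011 => //; rewrite /K2mx ent_mul4 //= h0 h1; ring.
move=> gSp h1; apply: (K1K2pow_stepU (c := - ent g 0 0)) => // [|g'Sp].
  by solve_inO.
by apply: col_01 => //; rewrite /Umx ent_mul4 //= h1; ring.
Qed.

Lemma unit00_K1K2pow g : inSp4O v g -> unitO (ent g 0 0) -> K1K2pow 18 g.
Proof.
move=> gSp u00; have g00 := unitO_neq0 u00.
have cO : inO v ((1 - ent g 1 0) / ent g 0 0).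
  by apply: inOM; [solve_inO | exact: unitO_invO].
apply: (K1K2pow_stepL cO gSp) => g'Sp.
by apply: ent10_1_K1K2pow => //; rewrite /Lmx ent_mul4 //=; field.
Qed.

Lemma unit_col0_K1K2pow g : inSp4O v g ->
  [|| unitO (ent g 0 0), unitO (ent g 1 0), unitO (ent g 2 0) | unitO (ent g 3 0)] ->
  K1K2pow 21 g.
Proof.
have unit10 h : inSp4O v h -> unitO (ent h 1 0) -> K1K2pow 19 h.
  move=> hSp u; apply: (K1K2pow_stepP hSp) => h'Sp; apply: unit00_K1K2pow => //.
  by have -> : ent (Pmx * h) 0 0 = ent h 1 0 by rewrite /Pmx ent_mul4 //=; ring.
have unit20 h : inSp4O v h -> unitO (ent h 2 0) -> K1K2pow 20 h.
  move=> hSp u.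
  apply: (K1K2pow_stepK2 (p := 0) (q := 1) (r := -1) (s := 0) _ _ _ _ _ hSp).
  all: try solve [solve_inO | ring].
  move=> h'Sp; apply: unit10 => //.
  by have -> : ent (K2mx 0 1 (-1) 0 * h) 1 0 = ent h 2 0 by rewrite /K2mx ent_mul4 //=; ring.
have unit30 h : inSp4O v h -> unitO (ent h 3 0) -> K1K2pow 21 h.
  move=> hSp u; apply: (K1K2pow_stepP hSp) => h'Sp; apply: unit20 => //.
  by have -> : ent (Pmx * h) 2 0 = ent h 3 0 by rewrite /Pmx ent_mul4 //=; ring.
move=> gSp /or4P[/(unit00_K1K2pow gSp)|/(unit10 _ gSp)|/(unit20 _ gSp)|/(unit30 _ gSp)] //.
all: exact: K1K2pow_le.
Qed.

(* The (0,3) entry of [g^T J g = J] makes the first column of [g] unimodular. *)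
Lemma Sp4O_unit_col0 g : inSp4O v g ->
  [|| unitO (ent g 0 0), unitO (ent g 1 0), unitO (ent g 2 0) | unitO (ent g 3 0)].
Proof.
move=> gSp; apply/negPn/negP; rewrite !negb_or => /and4P[n0 n1 n2 n3].
have m i : (i < 4)%N -> ~~ unitO (ent g i 0) -> inm (ent g i 0).
  by move=> _; apply: inm_nonunitO; exact: Sp4O_entO gSp.
have := Sp4O_ent (i := 0) (j := 3) gSp isT isT; rewrite /Jent /= => rel.
suff : inm 1 by rewrite inm1F.
rewrite -rel; apply: inmD; last by apply/inmN; rewrite mulrC; apply: inmM (m 3%N isT n3); solve_inO.
apply: inmD; last by apply/inmN; rewrite mulrC; apply: inmM (m 2%N isT n2); solve_inO.
by apply: inmD; rewrite mulrC; apply: inmM; solve_inO; [exact: m 0%N isT n0 | exact: m 1%N isT n1].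
Qed.

Lemma Sp4O_K1K2pow g : inSp4O v g -> K1K2pow 21 g.
Proof. by move=> gSp; apply: unit_col0_K1K2pow gSp (Sp4O_unit_col0 gSp). Qed.

Lemma K1K2pow_prod n g : K1K2pow n g -> exists k : 'I_(n.*2) -> 'M[F]_4,
  (forall i : 'I_(n.*2), if odd i then inK2 v (k i) else inK1 v (k i)) /\
  g = \prod_(i < n.*2) k i.
Proof.
elim=> [|m a b h Ka Kb _ [k [Kk ->]]].
  by exists (fun _ => 1); split; [case | rewrite big_ord0].
exists (fun i : 'I_(m.*2).+2 => if unlift ord0 i is Some j then
  if unlift ord0 j is Some l then k l else b else a); split.
  move=> i; case: (unliftP ord0 i) => [j ->|->] //=.
  by case: (unliftP ord0 j) => [l ->|->] //=; rewrite negbK add0n; exact: Kk.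
rewrite !big_ord_recl unlift_none liftK unlift_none mulrA; congr (_ * _).
by apply: eq_bigr => i _; rewrite !liftK.
Qed.

End Sp4O.

Theorem lemma3p9 (F : fieldType) (v : F -> int) (HF : nonarch_local_field v)
    (g : 'M[F]_4) (Hg : inSp4O v g) :
  exists k : 'I_60 -> 'M[F]_4,
    (forall i : 'I_60, if odd i then inK2 v (k i) else inK1 v (k i)) /\
    g = \prod_(i < 60) k i.
Proof.
have [vM vD _ _ _] := HF.
have K30 : K1K2pow v 30 g by apply: (K1K2pow_le vM _ (Sp4O_K1K2pow vM vD Hg)).
by have [k [Kk ->]] := K1K2pow_prod K30; exists k.
Qed.
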